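(* Let $l_0,l_1,l_2$ be pairwise coprime with $1\le l_0\le l_1\le l_2$, $G=x_0^{l_1l_2}+x_1^{l_0l_2}+x_2^{l_0l_1}$, and let $\lambda,\mu,\gamma\in\mathbb{C}$ be $\mathbb{Z}$-linearly independent. Let $\mathcal{F}_0$ be the foliation on $\mathbb{P}(l_0,l_1,l_2)$ (of normal degree $l_0l_1l_2+l_0+l_1+l_2$) induced by $$\beta=x_0x_1x_2G\left(\lambda l_1l_2\frac{dx_0}{x_0}+\mu l_0l_2\frac{dx_1}{x_1}+\gamma l_0l_1\frac{dx_2}{x_2}-(\lambda+\mu+\gamma)\frac{dG}{G}\right).$$ Then there are singularities of $\mathcal{F}_0$ in $\mathbb{P}(l_0,l_1,l_2)\setminus\{x_0x_1x_2=0\}$ through which no $\mathcal{F}_0$-invariant algebraic curve passes.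
   Context: $\mathbb{P}(l_0,l_1,l_2)$ is the quotient of $\mathbb{C}^3\setminus\{0\}$ by $t\cdot(x_0,x_1,x_2)=(t^{l_0}x_0,t^{l_1}x_1,t^{l_2}x_2)$. A foliation is the class of a 1-form $\omega=\sum A_idx_i$ with $A_i$ quasi-homogeneous of degree $d-l_i$ and $\sum l_ix_iA_i=0$; its singularities are the points where $\omega$ vanishes. An algebraic curve is the zero set of a nonconstant quasi-homogeneous polynomial $F$; it is invariant if $\omega\wedge dF=F\Theta$ for some polynomial 2-form $\Theta$. *)

From HB Require Import structures.
From mathcomp Require Import all_boot all_order all_algebra.
From mathcomp Require Import reals complex.
From mathcomp Require Import mpoly.
Set Implicit Arguments. Unset Strict Implicit. Unset Printing Implicit Defensive.
Import Order.TTheory GRing.Theory Num.Theory.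
Local Open Scope ring_scope.

Section Foliation.
Variable K : fieldType.
Notation P := {mpoly K[3]}.

Definition wt (l0 l1 l2 : nat) (i : 'I_3) : nat :=
  if val i == 0%N then l0 else if val i == 1%N then l1 else l2.

Definition wdeg (l0 l1 l2 : nat) (m : 'X_{1..3}) : nat :=
  (\sum_(i < 3) wt l0 l1 l2 i * m i)%N.

Definition qhomog (l0 l1 l2 d : nat) (F : P) : Prop :=
  forall m, m \in msupp F -> wdeg l0 l1 l2 m = d.

Definition nonconstant (F : P) : Prop := forall c : K, F != c%:MP.

(* an algebraic curve {F = 0} in P(l0,l1,l2): F nonconstant quasi-homogeneous *)
Definition curve_eq (l0 l1 l2 : nat) (F : P) : Prop :=
  (exists d, qhomog l0 l1 l2 d F) /\ nonconstant F.

(* A 1-form omega = sum_i A i dx_i.  omega /\ dF has components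
   A_i dF/dx_j - A_j dF/dx_i (i<j); invariance: omega /\ dF = F Theta
   for a polynomial 2-form Theta. *)
Definition invariant_curve (A : 'I_3 -> P) (F : P) : Prop :=
  exists Theta : 'I_3 -> 'I_3 -> P,
    forall i j : 'I_3, (i < j)%N ->
      A i * F^`M(j) - A j * F^`M(i) = F * Theta i j.

(* singular point: representative p in C^3 \ {0} where omega vanishes *)
Definition singular_at (A : 'I_3 -> P) (p : 'I_3 -> K) : Prop :=
  (exists i, p i != 0) /\ forall i, (A i).@[p] = 0.

End Foliation.

Definition Gpoly (K : fieldType) (l0 l1 l2 : nat) : {mpoly K[3]} :=
  'X_0 ^+ (l1 * l2) + 'X_1 ^+ (l0 * l2) + 'X_2 ^+ (l0 * l1).

(* components of beta = x0x1x2 G (lam l1l2 dx0/x0 + mu l0l2 dx1/x1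
   + gam l0l1 dx2/x2 - (lam+mu+gam) dG/G) *)
Definition beta (K : fieldType) (l0 l1 l2 : nat) (lam mu gam : K)
    (i : 'I_3) : {mpoly K[3]} :=
  let G := Gpoly K l0 l1 l2 in
  let s := lam + mu + gam in
  let x0 := 'X_0 : {mpoly K[3]} in
  let x1 := 'X_1 : {mpoly K[3]} in
  let x2 := 'X_2 : {mpoly K[3]} in
  if val i == 0%N then
    (lam * (l1 * l2)%:R) *: (x1 * x2 * G) - s *: (x0 * x1 * x2 * G^`M(i))
  else if val i == 1%N then
    (mu * (l0 * l2)%:R) *: (x0 * x2 * G) - s *: (x0 * x1 * x2 * G^`M(i))
  else
    (gam * (l0 * l1)%:R) *: (x0 * x1 * G) - s *: (x0 * x1 * x2 * G^`M(i)).

Definition Zlin_indep3 (K : ringType) (a b c : K) : Prop :=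
  forall u v w : int, u%:~R * a + v%:~R * b + w%:~R * c = 0 ->
    u = 0 /\ v = 0 /\ w = 0.

(* Let n_i = (l1 l2, l0 l2, l0 l1) be the exponents in G and lambda_i = (lambda, mu,
   gamma). At a point p with p_i^{n_i} = lambda_i one has G(p) = lambda + mu + gamma,
   so each coefficient B_i = lambda_i G - (lambda + mu + gamma) x_i^{n_i} of beta
   vanishes at p, and p is singular.
   An invariant curve F satisfies W F = K F for the derivation
   W = l0 B_1 x_0 d/dx_0 - l1 B_0 x_1 d/dx_1, with K quasi-homogeneous of degree l0 l1 l2.
   Multiplying F by its transforms under x_i := z x_i, z^{n_i} = 1, gives a multiple N
   of F invariant under these substitutions, whose cofactor is then of the form
   sum_j kappa_j x_j^{n_j}. Up to the factors x_j^{n_j}, W acts diagonally on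
   monomials; comparing the extreme monomials on both sides of W N = K N and using the
   Z-independence of lambda, mu, gamma shows that the kappa_j are the cofactor of
   some x^m G^e. Then N - c x^m G^e has the same cofactor but lacks a monomial that
   every nonzero such polynomial contains, so N = c x^m G^e, which does not vanish
   at p. *)

From HB Require Import structures.
From mathcomp Require Import all_boot all_order all_algebra.
From mathcomp Require Import reals complex.
From mathcomp Require Import mpoly.
From mathcomp Require Import cyclic separable cyclotomic.
From mathcomp Require Import ring zify.
Import Order.TTheory GRing.Theory Num.Theory.
Set Implicit Arguments. Unset Strict Implicit. Unset Printing Implicit Defensive.
Local Open Scope ring_scope.

(** * Euler operators and dilations *)

Section MpolyOperators.
Variables (K : fieldType) (n : nat).
Local Notation P := {mpoly K[n]}.
Implicit Types (p q : P) (m u : 'X_{1..n}).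

Lemma mcoeffXmM u p m :
  ('X_[u] * p)@_m = if (u <= m)%MM then p@_(m - u) else 0.
Proof.
case: ifP => um; first by rewrite -{1}(submK um) addmC mulrC mcoeffMX.
apply: memN_msupp_eq0; rewrite mulrC (perm_mem (msuppMX p u)).
by apply/mapP => -[m' _ mE]; rewrite mE lem_addr in um.
Qed.

Lemma mpolyX_neq0 (i : 'I_n) : 'X_i != 0 :> P.
Proof.
apply/eqP => /(congr1 (mcoeff U_(i))); rewrite mcoeffX eqxx mcoeff0.
by move/eqP; rewrite oner_eq0.
Qed.

Lemma mulX_eq_dvd (i j : 'I_n) p q : i != j -> 'X_j * p = 'X_i * q ->
  exists p', p = 'X_i * p'.
Proof.
move=> ij pq; exists (\sum_(m <- msupp p) p@_m *: 'X_[m - U_(i)]).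
rewrite {1}(mpolyE p) mulr_sumr; apply: eq_big_seq => m pm.
rewrite -scalerAr -mpolyXD addmC submK // lep1mP.
have := congr1 (mcoeff (m + U_(j))%MM) pq; rewrite !mcoeffXmM lem_addl addmK.
case: ifP => [/mnm_lepP/(_ i) + _|_ p0]; last by move: pm; rewrite mcoeff_msupp p0 eqxx.
by rewrite mnmDE !mnm1E eqxx eq_sym (negbTE ij) /= addn0 lt0n.
Qed.

Lemma mulX2_factor (i j : 'I_n) F q a b : i != j -> F != 0 ->
  'X_i * q = F * a -> 'X_j * q = F * b -> exists c, q = F * c.
Proof.
move=> ij F0 qa qb; have ab : 'X_j * a = 'X_i * b.
  by apply: (mulfI F0); rewrite mulrCA -qa [RHS]mulrCA -qb mulrCA.
have [c ac] := mulX_eq_dvd ij ab.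
by exists c; apply: (mulfI (mpolyX_neq0 i)); rewrite qa ac mulrCA.
Qed.

Definition meuler (i : 'I_n) p : P := 'X_i * p^`M(i).

Lemma mcoeff_meuler i p m : (meuler i p)@_m = (m i)%:R * p@_m.
Proof.
rewrite /meuler mcoeffXmM; case: ifP => [|/negbT].
  rewrite lep1mP => mi; rewrite mcoeff_mderiv submK ?lep1mP //.
  by rewrite mnmBE mnm1E eqxx subn1 prednK ?lt0n // mulr_natl.
by rewrite lep1mP negbK => /eqP ->; rewrite mul0r.
Qed.

Lemma meuler_is_linear i : linear (meuler i).
Proof.
move=> c p q; apply/mpolyP => m.
by rewrite mcoeffD mcoeffZ !mcoeff_meuler mcoeffD mcoeffZ; ring.
Qed.

HB.instance Definition _ i :=
  GRing.isLinear.Build K P P _ (meuler i) (meuler_is_linear i).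

Lemma meulerX i m : meuler i 'X_[m] = (m i)%:R *: 'X_[m].
Proof.
apply/mpolyP => m'; rewrite mcoeff_meuler mcoeffZ !mcoeffX.
by case: eqP => [->|_]; rewrite ?mulr0.
Qed.

Lemma meulerC i c : meuler i c%:MP = 0.
Proof. by rewrite /meuler mderivC mulr0. Qed.

Lemma meulerM i p q : meuler i (p * q) = meuler i p * q + p * meuler i q.
Proof. by rewrite /meuler mderivM; ring. Qed.

Lemma dhomog_meuler (mf : measure n) d i p :
  p \is d.-homog for mf -> meuler i p \is d.-homog for mf.
Proof.
move=> /dhomogP pd; apply/dhomogP => m; rewrite mcoeff_msupp mcoeff_meuler.
by rewrite mulf_eq0 negb_or => /andP[_]; rewrite -mcoeff_msupp => /pd.
Qed.

Definition mdil (i : 'I_n) (w : K) p : P :=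
  p \mPo [tuple (if j == i then w *: 'X_j else 'X_j) | j < n].

HB.instance Definition _ i w := GRing.LRMorphism.copy (mdil i w)
  (comp_mpoly [tuple (if j == i then w *: 'X_j else 'X_j) | j < n]).

Lemma mdilX i w m : mdil i w 'X_[m] = w ^+ m i *: 'X_[m].
Proof.
rewrite /mdil comp_mpolyX [in RHS]mpolyXE_id (bigD1 i) // [in RHS](bigD1 i) //=.
rewrite tnth_mktuple eqxx exprZn -!scalerAl; congr (_ *: (_ * _)).
by apply: eq_bigr => j /negbTE ji; rewrite tnth_mktuple ji.
Qed.

Lemma mcoeff_mdil i w p m : (mdil i w p)@_m = w ^+ m i * p@_m.
Proof.
elim/mpolyind: p => [|c m' p _ _ IH]; first by rewrite raddf0 !mcoeff0 mulr0.
rewrite raddfD /= linearZ /= mdilX !mcoeffD !mcoeffZ IH !mcoeffX.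
by case: eqP => [->|_]; rewrite ?mulr0 //; ring.
Qed.

Lemma mdil1 i p : mdil i 1 p = p.
Proof. by apply/mpolyP => m; rewrite mcoeff_mdil expr1n mul1r. Qed.

Lemma mdil_mdil i w w' p : mdil i w (mdil i w' p) = mdil i (w * w') p.
Proof. by apply/mpolyP => m; rewrite !mcoeff_mdil mulrA exprMn. Qed.

Lemma mdilC i j w z p : mdil i w (mdil j z p) = mdil j z (mdil i w p).
Proof. by apply/mpolyP => m; rewrite !mcoeff_mdil mulrCA. Qed.

Lemma mdil_meuler i j w p : mdil i w (meuler j p) = meuler j (mdil i w p).
Proof. by apply/mpolyP => m; rewrite !(mcoeff_mdil, mcoeff_meuler) mulrCA. Qed.

Lemma mdil_eq0 i w p : w != 0 -> (mdil i w p == 0) = (p == 0).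
Proof.
move=> w0; apply/eqP/eqP => [pw0|->]; last exact: raddf0.
apply/mpolyP => m; have /eqP := congr1 (mcoeff m) pw0.
by rewrite mcoeff_mdil mcoeff0 mulf_eq0 expf_eq0 (negbTE w0) andbF => /eqP.
Qed.

Lemma dhomog_mdil (mf : measure n) d i w p :
  p \is d.-homog for mf -> mdil i w p \is d.-homog for mf.
Proof.
move=> /dhomogP pd; apply/dhomogP => m; rewrite mcoeff_msupp mcoeff_mdil.
by rewrite mulf_eq0 negb_or => /andP[_]; rewrite -mcoeff_msupp => /pd.
Qed.

Lemma mdil_fixed_dvd i w k p m : k.-primitive_root w -> mdil i w p = p ->
  m \in msupp p -> (k %| m i)%N.
Proof.
move=> w_prim pw; rewrite mcoeff_msupp (prim_order_dvd w_prim) => pm.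
by have := congr1 (mcoeff m) pw; rewrite mcoeff_mdil -{2}[p@_m]mul1r => /(mulIf pm) ->.
Qed.

End MpolyOperators.

Section MdilNorm.
Variables (K : fieldType) (n : nat) (i : 'I_n) (w : K) (k : nat).
Hypotheses (w_root : w ^+ k = 1) (k_gt0 : (0 < k)%N).
Local Notation P := {mpoly K[n]}.

Definition mnorm p : P := \prod_(0 <= j < k) mdil i (w ^+ j) p.

Lemma unity_root_neq0 : w != 0.
Proof.
apply/eqP => w0; move: w_root; rewrite w0 expr0n gtn_eqF //= => /eqP.
by rewrite eq_sym oner_eq0.
Qed.

Lemma mnorm_neq0 p : p != 0 -> mnorm p != 0.
Proof.
move=> p0; rewrite prodf_seq_neq0; apply/allP => j _ /=.
by rewrite mdil_eq0 // expf_neq0 // unity_root_neq0.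
Qed.

Lemma mdil_mnorm p : mdil i w (mnorm p) = mnorm p.
Proof.
rewrite /mnorm rmorph_prod /=; move: w_root; case: k k_gt0 => // k' _ wk.
under eq_bigr do rewrite mdil_mdil -exprS.
by rewrite big_nat_recr //= wk big_nat_recl //= mulrC.
Qed.

Lemma mdil_mnorm_fixed j z p : mdil j z p = p -> mdil j z (mnorm p) = mnorm p.
Proof.
by move=> pz; rewrite /mnorm rmorph_prod /=; apply: eq_bigr => l _; rewrite mdilC pz.
Qed.

Lemma meval_mnorm_eq0 (v : 'I_n -> K) p : p.@[v] = 0 -> (mnorm p).@[v] = 0.
Proof.
by move=> pv; rewrite /mnorm; case: k k_gt0 => // k' _; rewrite big_nat_recl // mevalM mdil1 pv mul0r.
Qed.

Lemma dhomog_mnorm (mf : measure n) d p :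
  p \is d.-homog for mf -> mnorm p \is (d * k).-homog for mf.
Proof.
move=> pd; rewrite /mnorm /index_iota subn0 -[in (d * k)%N](size_iota 0 k).
elim: (iota 0 k) => [|j r IH].
  by rewrite big_nil muln0 dhomog1.
by rewrite big_cons /= mulnS; apply: dhomogM => //; apply: dhomog_mdil.
Qed.

End MdilNorm.

Lemma pihomogM (K : fieldType) n (mf : measure n) d e (p q : {mpoly K[n]}) :
  p \is d.-homog for mf -> pihomog mf (e + d) (q * p) = pihomog mf e q * p.
Proof.
move=> pd; elim/mpolyind: q => [|c m q _ _ IH]; first by rewrite mul0r !raddf0 mul0r.
rewrite mulrDl !raddfD /= IH mulrDl; congr (_ + _).
have cmp : c *: 'X_[m] * p \is (mf m + d).-homog for mf.
  by apply: dhomogM => //; apply: dhomogZ; rewrite dhomogX.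
rewrite !linearZ /= pihomogX -scalerAl; case: eqP => [<-|me].
  by rewrite scalerAl pihomog_dE.
by rewrite scaler0 mul0r scalerAl (pihomog_ne0 _ cmp) // eqn_add2r; apply/eqP.
Qed.

Lemma exists_lexmin (T : eqType) (s : seq T) (f g : T -> nat) : s != [::] ->
  exists2 x, x \in s & (forall y, y \in s -> f x <= f y)%N /\
                       (forall y, y \in s -> f y = f x -> g x <= g y)%N.
Proof.
case: s => // x0 s _.
have ex_f : exists a, has (fun y => f y == a) (x0 :: s) by exists (f x0); rewrite /= eqxx.
case: (ex_minnP ex_f) => a /hasP [y0 y0s /eqP fy0] min_a.
have ex_g : exists b, has (fun y => (f y == a) && (g y == b)) (x0 :: s).
  by exists (g y0); apply/hasP; exists y0; rewrite ?fy0 ?eqxx.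
case: (ex_minnP ex_g) => b /hasP [x xs /andP [/eqP fx /eqP gx]] min_b.
exists x => //; split => [y ys|y ys fy]; first by rewrite fx; apply: min_a; apply/hasP; exists y.
by rewrite gx; apply: min_b; apply/hasP; exists y; rewrite // fy fx !eqxx.
Qed.

Lemma ord3P (j : 'I_3) : [\/ j = 0, j = 1 | j = 2].
Proof.
by case: j => [[|[|[|k]]] jlt] //=; [constructor 1|constructor 2|constructor 3]; apply/val_inj.
Qed.

Lemma ord3_other (j0 f g j : 'I_3) :
  f != g -> f != j0 -> g != j0 -> j != j0 -> j = f \/ j = g.
Proof.
move=> fg fj gj jj0.
case: (ord3P j) jj0 => -> jj0; case: (ord3P j0) fj gj jj0 => -> fj gj jj0;
case: (ord3P f) fg fj => -> fg fj; case: (ord3P g) fg gj => -> fg gj;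
first [by left | by right | by []].
Qed.

Lemma big_ord3 (V : nmodType) (F : 'I_3 -> V) : \sum_(j < 3) F j = F 0 + F 1 + F 2.
Proof.
rewrite !big_ord_recr big_ord0 /= add0r; congr (F _ + F _ + F _); exact: val_inj.
Qed.

(** * The foliation *)

Section WeightedDegree.
Variables l0 l1 l2 : nat.
Local Notation wdeg := (wdeg l0 l1 l2).

Lemma wdegE m : wdeg m = (l0 * m 0%R + l1 * m 1%R + l2 * m 2%R)%N.
Proof.
by rewrite /wdeg !big_ord_recr big_ord0 /= add0n; congr (_ * m _ + _ * m _ + _ * m _);
  apply: val_inj.
Qed.

Lemma wdeg0 : wdeg 0%MM = 0%N.
Proof. by rewrite wdegE !mnm0E !muln0. Qed.

Lemma wdegD : {morph wdeg : m1 m2 / (m1 + m2)%MM >-> (m1 + m2)%N}.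
Proof. by move=> m1 m2; rewrite !wdegE !mnmDE; ring. Qed.

HB.instance Definition _ := isMeasure.Build 3 wdeg wdeg0 wdegD.

Lemma qhomog_dhomog (K : fieldType) d (p : {mpoly K[3]}) :
  qhomog l0 l1 l2 d p -> p \is d.-homog for wdeg.
Proof. by move=> pd; apply/dhomogP => m /pd. Qed.

Lemma euler_relation (K : fieldType) d (p : {mpoly K[3]}) : p \is d.-homog for wdeg ->
  l0%:R * meuler 0 p + l1%:R * meuler 1 p + l2%:R * meuler 2 p = d%:R * p.
Proof.
move=> /dhomogP pd; apply/mpolyP => m; rewrite -!mpolyC_nat !mcoeffD !mcoeffCM !mcoeff_meuler.
have [/pd <-|/memN_msupp_eq0 ->] := boolP (m \in msupp p); last by rewrite !mulr0 !addr0.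
by rewrite -[Measure.sort _ m]/(wdeg m) wdegE !natrD !natrM; ring.
Qed.

End WeightedDegree.

Lemma closed_prim_root_exists (C : closedFieldType) n :
  (0 < n)%N -> n%:R != 0 :> C -> exists z : C, n.-primitive_root z.
Proof.
move=> n_gt0 n0; have [r Dp] := closed_field_poly_normal ('X^n - 1 : {poly C}).
rewrite (monicP _) ?monicXnsubC // scale1r in Dp.
have rn1 : all n.-unity_root r by apply/allP => z; rewrite -root_prod_XsubC -Dp.
have sz_r : (n < (size r).+1)%N by rewrite -(size_prod_XsubC r id) -Dp size_XnsubC.
have [|z] := hasP (has_prim_root n_gt0 rn1 _ sz_r); last by exists z.
by rewrite -separable_prod_XsubC -Dp separable_Xn_sub_1.
Qed.

Section Foliation.
Variable C : numClosedFieldType.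
Variables (l0 l1 l2 : nat) (lam mu gam : C).
Hypotheses (l0_gt0 : (0 < l0)%N) (l1_gt0 : (0 < l1)%N) (l2_gt0 : (0 < l2)%N).
Hypothesis lmg_indep : Zlin_indep3 lam mu gam.
Local Notation P := {mpoly C[3]}.
Local Notation G := (Gpoly C l0 l1 l2).
Local Notation beta := (beta l0 l1 l2 lam mu gam).
Local Notation s := (lam + mu + gam).
Local Notation L := (l0 * l1 * l2)%N.
Local Notation wdeg := (wdeg l0 l1 l2).
Local Notation hom d p := (p \is d.-homog for wdeg).
Implicit Types (p q : P) (m : 'X_{1..3}).

Definition Gexp (i : 'I_3) : nat :=
  if val i == 0%N then l1 * l2 else if val i == 1%N then l0 * l2 else l0 * l1.

Definition Gmon i : 'X_{1..3} := (U_(i) *+ Gexp i)%MM.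

Definition resid (i : 'I_3) : C :=
  if val i == 0%N then lam else if val i == 1%N then mu else gam.

Lemma Gexp_gt0 i : (0 < Gexp i)%N.
Proof. by case: (ord3P i) => ->; rewrite /Gexp /= muln_gt0 ?l0_gt0 ?l1_gt0 ?l2_gt0. Qed.

Lemma Gmon_coord j k : Gmon j k = if j == k then Gexp j else 0%N.
Proof. by rewrite mulmnE mnm1E; case: eqP; rewrite ?mul1n. Qed.

Lemma lprod_gt0 : (0 < L)%N.
Proof. by rewrite !muln_gt0 l0_gt0 l1_gt0 l2_gt0. Qed.

Lemma Gmon_inj : injective Gmon.
Proof.
move=> j k /mnmP/(_ j); rewrite !Gmon_coord eqxx; case: eqP => [-> //|_ /eqP].
by rewrite eqn0Ngt Gexp_gt0.
Qed.

Lemma Gmon_mulE j e k : (Gmon j *+ e)%MM k = if j == k then (Gexp j * e)%N else 0%N.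
Proof. by rewrite mulmnE Gmon_coord; case: eqP. Qed.

Lemma wdeg_Gmon j : wdeg (Gmon j) = L.
Proof. by rewrite wdegE !Gmon_coord; case: (ord3P j) => -> /=; rewrite /Gexp /=; ring. Qed.

Lemma wdeg_Gmon_mul j e : wdeg (Gmon j *+ e) = (L * e)%N.
Proof.
elim: e => [|e IH]; first by rewrite mulm0n wdeg0 muln0.
by rewrite mulmS wdegD IH wdeg_Gmon mulnS.
Qed.

Lemma dhomog_XGmon j : hom L ('X_[Gmon j] : P).
Proof. by rewrite dhomogX /= wdeg_Gmon. Qed.

Lemma GpolyE : G = \sum_j 'X_[Gmon j].
Proof. by rewrite big_ord3 -!mpolyXn. Qed.

Lemma dhomog_G : hom L G.
Proof.
by rewrite GpolyE; apply: rpred_sum => j _; apply: dhomog_XGmon.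
Qed.

Lemma meuler_G i : meuler i G = (Gexp i)%:R *: 'X_[Gmon i].
Proof.
rewrite GpolyE linear_sum (bigD1 i) //= meulerX Gmon_coord eqxx big1 ?addr0 // => j ji.
by rewrite meulerX Gmon_coord (negbTE ji) scale0r.
Qed.

Lemma mdil_Gmon i w j : w ^+ Gexp i = 1 -> mdil i w 'X_[Gmon j] = 'X_[Gmon j] :> P.
Proof.
by move=> wi; rewrite mdilX Gmon_coord; case: eqP => [->|_]; rewrite ?wi scale1r.
Qed.

Lemma mdil_mpolyC i w c : mdil i w (c%:MP : P) = c%:MP.
Proof. by rewrite -[c%:MP]mulr1 mul_mpolyC linearZ rmorph1. Qed.

Lemma mdil_G i w : w ^+ Gexp i = 1 -> mdil i w G = G.
Proof. by move=> wi; rewrite GpolyE rmorph_sum /=; apply: eq_bigr => j _; rewrite mdil_Gmon. Qed.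

(* beta = x_0 x_1 x_2 sum_i n_i B_i dx_i / x_i, see [mulX_beta]. *)
Definition Bpol i : P := (resid i)%:MP * G - s%:MP * 'X_[Gmon i].

Lemma Bpol_sum : Bpol 0 + Bpol 1 + Bpol 2 = 0.
Proof. by rewrite /Bpol /resid /= GpolyE big_ord3 !rmorphD; ring. Qed.

Lemma dhomog_Bpol i : hom L (Bpol i).
Proof.
by rewrite /Bpol !mul_mpolyC; apply: rpredB; apply: dhomogZ; rewrite ?dhomog_G ?dhomog_XGmon.
Qed.

Lemma mdil_Bpol i w j : w ^+ Gexp i = 1 -> mdil i w (Bpol j) = Bpol j.
Proof. by move=> wi; rewrite /Bpol rmorphB !rmorphM /= !mdil_mpolyC mdil_G ?mdil_Gmon. Qed.

Lemma mulX_beta i : 'X_i * beta i = (Gexp i)%:R * ('X_0 * 'X_1 * 'X_2) * Bpol i.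
Proof.
have mX j : 'X_j * ('X_0 * 'X_1 * 'X_2 * G^`M(j)) = 'X_0 * 'X_1 * 'X_2 * meuler j G.
  by rewrite /meuler; ring.
rewrite /Bpol; case: (ord3P i) => ->; rewrite /beta /= mulrBr -!scalerAr mX meuler_G;
  by rewrite -!mul_mpolyC !rmorphM /= !mpolyC_nat /Gexp /resid /=; ring.
Qed.

(* beta annihilates both W below and the Euler field sum_i l_i x_i d/dx_i, which
   spans the rest of its kernel; an invariant curve F is thus one with F | W F. *)
Definition Wder p : P :=
  l0%:R * Bpol 1 * meuler 0 p - l1%:R * Bpol 0 * meuler 1 p.

Lemma Wder_is_linear : linear Wder.
Proof. by move=> c p q; rewrite /Wder !linearP /= -!mul_mpolyC; ring. Qed.

HB.instance Definition _ := GRing.isLinear.Build C P P _ Wder Wder_is_linear.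

Lemma WderM p q : Wder (p * q) = Wder p * q + p * Wder q.
Proof. by rewrite /Wder !meulerM; ring. Qed.

Lemma WderC c : Wder c%:MP = 0.
Proof. by rewrite /Wder !meulerC !mulr0 subrr. Qed.

Lemma WderX m :
  Wder 'X_[m] = ((l0 * m 0)%:R * Bpol 1 - (l1 * m 1)%:R * Bpol 0) * 'X_[m].
Proof. by rewrite /Wder !meulerX -!mul_mpolyC !mpolyC_nat !natrM; ring. Qed.

Lemma Wder_exp p k : Wder (p ^+ k) = k%:R * p ^+ k.-1 * Wder p.
Proof.
elim: k => [|k IH]; first by rewrite expr0 -mpolyC1 WderC !mul0r.
by rewrite exprS WderM IH; case: k {IH} => [|k] /=; rewrite ?exprS; ring.
Qed.

Lemma Wder_prod (r : seq nat) (f k : nat -> P) : (forall j, Wder (f j) = k j * f j) ->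
  Wder (\prod_(j <- r) f j) = (\sum_(j <- r) k j) * \prod_(j <- r) f j.
Proof.
move=> fk; elim: r => [|j r IH]; first by rewrite !big_nil -mpolyC1 WderC mul0r.
by rewrite !big_cons WderM IH fk; ring.
Qed.

Lemma dhomog_Wder d p : hom d p -> hom (d + L) (Wder p).
Proof.
move=> pd; rewrite /Wder -!mpolyC_nat !mul_mpolyC -!scalerAl addnC.
by apply: rpredB; apply: dhomogZ; apply: dhomogM;
  rewrite ?dhomog_Bpol ?dhomog_meuler.
Qed.

Lemma mdil_Wder i w p : w ^+ Gexp i = 1 -> mdil i w (Wder p) = Wder (mdil i w p).
Proof.
by move=> wi; rewrite /Wder -!mdil_meuler rmorphB !rmorphM /= !rmorph_nat !mdil_Bpol.
Qed.

Lemma invariant_Wder d F : F != 0 -> hom d F -> invariant_curve beta F ->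
  exists K, Wder F = K * F.
Proof.
move=> F0 Fd [Th FTh].
have X0 j : 'X_0 * 'X_j != 0 :> P by rewrite mulf_neq0 ?mpolyX_neq0.
have e2 : 'X_2 * (l2%:R * Wder F) = F * - Th 0 1.
  apply: (mulfI (X0 1)); rewrite mulrN -(FTh 0 1) //.
  transitivity (('X_1 * beta 1) * meuler 0 F - ('X_0 * beta 0) * meuler 1 F).
    by rewrite !mulX_beta /Wder /Gexp /= !natrM; ring.
  by rewrite /meuler; ring.
have e1 : 'X_1 * (l1%:R * Wder F) = F * (Th 0 2 - d%:R * l1%:R * 'X_1 * Bpol 0).
  apply: (mulfI (X0 2)); rewrite [in RHS]mulrBr -(FTh 0 2) //.
  have -> : F * (d%:R * l1%:R * 'X_1 * Bpol 0) = l1%:R * 'X_1 * Bpol 0 *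
      (l0%:R * meuler 0 F + l1%:R * meuler 1 F + l2%:R * meuler 2 F).
    by rewrite (euler_relation Fd); ring.
  have B2E : Bpol 2 = - Bpol 0 - Bpol 1.
    by apply: (addrI (Bpol 0 + Bpol 1)); rewrite Bpol_sum; ring.
  transitivity (('X_0 * beta 0) * meuler 2 F - ('X_2 * beta 2) * meuler 0 F
    - 'X_0 * 'X_2 * (l1%:R * 'X_1 * Bpol 0 *
       (l0%:R * meuler 0 F + l1%:R * meuler 1 F + l2%:R * meuler 2 F))).
    by rewrite !mulX_beta B2E /Wder /Gexp /= !natrM; ring.
  by rewrite /meuler; ring.
have e1' : 'X_1 * (l1%:R * l2%:R * Wder F) = F * (l2%:R * (Th 0 2 - d%:R * l1%:R * 'X_1 * Bpol 0)).
  by rewrite [RHS]mulrCA -e1; ring.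
have e2' : 'X_2 * (l1%:R * l2%:R * Wder F) = F * (l1%:R * - Th 0 1).
  by rewrite [RHS]mulrCA -e2; ring.
have [k Fk] := mulX2_factor (isT : (1 : 'I_3) != 2) F0 e1' e2'.
exists (((l1 * l2)%:R : C)^-1 *: k); rewrite mulrC -scalerAr -Fk -natrM -mpolyC_nat.
by rewrite mul_mpolyC scalerA mulVf ?scale1r // pnatr_eq0 -lt0n muln_gt0 l1_gt0.
Qed.

Lemma Wder_cofactor_dhomog d F K : hom d F -> Wder F = K * F ->
  Wder F = pihomog wdeg L K * F /\ hom L (pihomog wdeg L K).
Proof.
move=> Fd FK; split; last exact: pihomogP.
by rewrite -(pihomogM L K Fd) -FK pihomog_dE // addnC dhomog_Wder.
Qed.

Lemma Wder_G : Wder G = L%:R * G * (mu%:MP * 'X_[Gmon 0] - lam%:MP * 'X_[Gmon 1]).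
Proof.
rewrite /Wder !meuler_G /Bpol /resid /Gexp /= GpolyE big_ord3 -!mul_mpolyC !mpolyC_nat.
by rewrite !natrM; ring.
Qed.

Lemma Wder_Gpow e :
  Wder (G ^+ e) = (L * e)%:R * (mu%:MP * 'X_[Gmon 0] - lam%:MP * 'X_[Gmon 1]) * G ^+ e.
Proof.
rewrite Wder_exp Wder_G; case: e => [|e] /=; first by rewrite muln0 !mul0r.
by rewrite exprS natrM; ring.
Qed.

Lemma mcoeff_Gpow j e : (G ^+ e)@_(Gmon j *+ e) = 1.
Proof.
elim: e => [|e IH]; first by rewrite expr0 mulm0n mcoeff1 eqxx.
rewrite exprS {1}GpolyE mulr_suml raddf_sum (bigD1 j) //= mcoeffXmM mulmS lem_addr /=.
rewrite addmC addmK IH big1 ?addr0 // => k kj; rewrite mcoeffXmM.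
case: ifP => // /mnm_lepP/(_ k); rewrite mnmDE Gmon_mulE !Gmon_coord eqxx.
by rewrite eq_sym (negbTE kj) /=; have := Gexp_gt0 k; lia.
Qed.

(** * Polynomials with a diagonal cofactor *)

Definition Gcomb (kap : 'I_3 -> C) : P := \sum_j kap j *: 'X_[Gmon j].

(* Expanding B_0 and B_1 in the monomials x_j^{n_j} writes W as
   sum_j x_j^{n_j} Wdiag_j ([Wder_diag]); [Wcoef j] collects the coefficients. *)
Definition Wcoef (j : 'I_3) : C * C :=
  if val j == 0%N then (mu, mu + gam)
  else if val j == 1%N then (- (lam + gam), - lam) else (mu, - lam).

Definition Weig j m : C := (Wcoef j).1 * (l0 * m 0%R)%:R + (Wcoef j).2 * (l1 * m 1%R)%:R.

Definition Wdiag j p : P :=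
  ((Wcoef j).1 * l0%:R) *: meuler 0 p + ((Wcoef j).2 * l1%:R) *: meuler 1 p.

Lemma mcoeff_Wdiag j p m : (Wdiag j p)@_m = Weig j m * p@_m.
Proof. by rewrite /Wdiag mcoeffD !mcoeffZ !mcoeff_meuler /Weig !natrM; ring. Qed.

Lemma Wder_diag p : Wder p = \sum_j 'X_[Gmon j] * Wdiag j p.
Proof.
rewrite big_ord3 /Wdiag /Wcoef /Wder /Bpol /resid /= GpolyE big_ord3 -!mul_mpolyC.
by rewrite !(rmorphD, rmorphN, rmorphM) /= !mpolyC_nat; ring.
Qed.

Lemma Weig_extremal p kap j0 m : Wder p = Gcomb kap * p -> m \in msupp p ->
  (forall j, j != j0 -> (Gmon j <= m + Gmon j0)%MM -> p@_(m + Gmon j0 - Gmon j) = 0) ->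
  Weig j0 m = kap j0.
Proof.
move=> pW mp hj; have := congr1 (mcoeff (m + Gmon j0)%MM) pW.
rewrite Wder_diag /Gcomb mulr_suml !raddf_sum /= (bigD1 j0) //= [in RHS](bigD1 j0) //=.
have -> : \sum_(j | j != j0) ('X_[Gmon j] * Wdiag j p)@_(m + Gmon j0) = 0.
  apply: big1 => j jj0; rewrite mcoeffXmM; case: ifP => // /(hj _ jj0) pj.
  by rewrite mcoeff_Wdiag pj mulr0.
have -> : \sum_(j | j != j0) (kap j *: 'X_[Gmon j] * p)@_(m + Gmon j0) = 0.
  apply: big1 => j jj0; rewrite -scalerAl mcoeffZ mcoeffXmM.
  by case: ifP => [/(hj _ jj0) ->|_]; rewrite mulr0.
rewrite !addr0 -scalerAl mcoeffZ !mcoeffXmM lem_addl addmK mcoeff_Wdiag => /eqP.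
rewrite mcoeff_msupp in mp.
by rewrite -subr_eq0 -mulrBl mulf_eq0 (negbTE mp) orbF subr_eq0 => /eqP.
Qed.

Lemma Weig_lexmin p kap j0 f g m : Wder p = Gcomb kap * p ->
  f != g -> f != j0 -> g != j0 -> m \in msupp p ->
  (forall m', m' \in msupp p -> m f <= m' f)%N ->
  (forall m', m' \in msupp p -> m' f = m f -> m g <= m' g)%N ->
  Weig j0 m = kap j0.
Proof.
move=> pW fg fj0 gj0 mp fmin gmin; apply: Weig_extremal pW mp _ => j jj0 /mnm_lepP le.
apply: memN_msupp_eq0; apply/negP => m'p.
have j0f : (j0 == f) = false by rewrite eq_sym (negbTE fj0).
have j0g : (j0 == g) = false by rewrite eq_sym (negbTE gj0).
have gf : (g == f) = false by rewrite eq_sym (negbTE fg).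
case: (ord3_other fg fj0 gj0 jj0) => ej; subst j.
- have := le f; have := fmin _ m'p; have := Gexp_gt0 f.
  by rewrite !mnmBE !mnmDE !Gmon_coord eqxx j0f /=; lia.
- have := le g; have := gmin _ m'p; have := Gexp_gt0 g.
  by rewrite !mnmBE !mnmDE !Gmon_coord eqxx j0f j0g gf /=; lia.
Qed.

Lemma Zlin_indep3_nat (a b c a' b' c' : nat) :
  a%:R * lam + b%:R * mu + c%:R * gam = a'%:R * lam + b'%:R * mu + c'%:R * gam ->
  [/\ a = a', b = b' & c = c'].
Proof.
move=> e; have /lmg_indep : (a%:Z - a'%:Z)%:~R * lam + (b%:Z - b'%:Z)%:~R * mu
    + (c%:Z - c'%:Z)%:~R * gam = 0.
  rewrite !rmorphB /= -!pmulrn; transitivity ((a%:R * lam + b%:R * mu + c%:R * gam)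
    - (a'%:R * lam + b'%:R * mu + c'%:R * gam)); first by ring.
  by rewrite e subrr.
by case=> /eqP + [/eqP + /eqP]; rewrite !subr_eq0 !eqz_nat => /eqP -> /eqP -> /eqP ->.
Qed.

Lemma Weig_inj j m m' : wdeg m = wdeg m' -> Weig j m = Weig j m' -> m = m'.
Proof.
move=> mm' e.
suff [e0 e1] : (l0 * m 0%R = l0 * m' 0%R /\ l1 * m 1%R = l1 * m' 1%R)%N.
  move: mm'; rewrite !wdegE e0 e1 => /addnI e2.
  have m0 : m 0%R = m' 0%R by apply/eqP; rewrite -(eqn_pmul2l l0_gt0) e0.
  have m1 : m 1%R = m' 1%R by apply/eqP; rewrite -(eqn_pmul2l l1_gt0) e1.
  have m2 : m 2%R = m' 2%R by apply/eqP; rewrite -(eqn_pmul2l l2_gt0) e2.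
  by apply/mnmP => k; case: (ord3P k) => ->.
case: (ord3P j) e => -> e.
- have [_ s01 e1] : [/\ 0 = 0, l0 * m 0%R + l1 * m 1%R = l0 * m' 0%R + l1 * m' 1%R
                         & l1 * m 1%R = l1 * m' 1%R]%N.
    apply: Zlin_indep3_nat; transitivity (Weig 0 m); last rewrite e;
    by rewrite natrD /Weig /Wcoef /=; ring.
  by lia.
- have [s01 _ e0] : [/\ l0 * m 0%R + l1 * m 1%R = l0 * m' 0%R + l1 * m' 1%R, 0 = 0
                         & l0 * m 0%R = l0 * m' 0%R]%N.
    apply: Zlin_indep3_nat; transitivity (- Weig 1 m); last rewrite e;
    by rewrite natrD /Weig /Wcoef /=; ring.
  by lia.
- have [e1 e0 _] : [/\ l1 * m' 1%R = l1 * m 1%R, l0 * m 0%R = l0 * m' 0%R & 0 = 0]%N.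
    apply: Zlin_indep3_nat.
    transitivity (Weig 2 m + (l1 * m 1%R)%:R * lam + (l1 * m' 1%R)%:R * lam).
      by rewrite /Weig /Wcoef /=; ring.
    by rewrite e /Weig /Wcoef /=; ring.
  by lia.
Qed.

Lemma exists_Weig_min p kap D j0 : p != 0 -> hom D p -> Wder p = Gcomb kap * p ->
  exists nu, [/\ nu \in msupp p,
    forall m j, m \in msupp p -> j != j0 -> (nu j <= m j)%N & kap j0 = Weig j0 nu].
Proof.
move=> p0 pD pW.
have [f [g [fg fj0 gj0]]] : exists f g : 'I_3, [/\ f != g, f != j0 & g != j0].
  by case: (ord3P j0) => ->; [exists 1, 2 | exists 0, 2 | exists 0, 1].
have gf : g != f by rewrite eq_sym.
have sp : msupp p != [::] by rewrite msupp_eq0.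
have [m mp [fmin gmin]] := exists_lexmin (fun m => m f) (fun m => m g) sp.
have [m' m'p [gmin' fmin']] := exists_lexmin (fun m => m g) (fun m => m f) sp.
have km := Weig_lexmin pW fg fj0 gj0 mp fmin gmin.
have km' := Weig_lexmin pW gf gj0 fj0 m'p gmin' fmin'.
have mm' : m = m'.
  apply: (Weig_inj (j := j0)); last by rewrite km km'.
  exact: etrans (dhomog_mf pD mp) (esym (dhomog_mf pD m'p)).
exists m; split=> // m'' j m''p jj0.
by case: (ord3_other fg fj0 gj0 jj0) => ->; [exact: fmin | rewrite mm'; exact: gmin'].
Qed.

Lemma Wder_XmGpow m e kap : (forall j, kap j = Weig j (m + Gmon j *+ e)) ->
  Wder ('X_[m] * G ^+ e) = Gcomb kap * ('X_[m] * G ^+ e).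
Proof.
move=> kapE; rewrite WderM WderX Wder_Gpow /Gcomb big_ord3 !kapE /Weig /Wcoef /=.
rewrite !mnmDE !Gmon_mulE /= /Bpol /resid /Gexp /=; set Ge := _ ^+ e.
rewrite GpolyE big_ord3 -!mul_mpolyC !(rmorphD, rmorphN, rmorphM) /= !mpolyC_nat.
by ring.
Qed.

Lemma Gmon_of_dvd m : wdeg m = L -> (forall i, Gexp i %| m i)%N -> exists j, m = Gmon j.
Proof.
move=> mL mdvd.
have [t0 mt0] := dvdnP (mdvd 0); have [t1 mt1] := dvdnP (mdvd 1).
have [t2 mt2] := dvdnP (mdvd 2).
have tsum : (t0 + t1 + t2 = 1)%N.
  apply/eqP; rewrite -(eqn_pmul2l lprod_gt0) muln1; apply/eqP.
  by rewrite -[in RHS]mL wdegE mt0 mt1 mt2 /Gexp /=; ring.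
have mE j : (forall k, m k = if j == k then Gexp j else 0%N) -> exists j, m = Gmon j.
  by move=> mk; exists j; apply/mnmP => k; rewrite mk Gmon_coord.
move: tsum; case: t0 mt0 => [|[|t0]] mt0; case: t1 mt1 => [|[|t1]] mt1;
  case: t2 mt2 => [|[|t2]] mt2 //= _; [apply: (mE 2) | apply: (mE 1) | apply: (mE 0)];
  by move=> k; case: (ord3P k) => -> /=; rewrite ?mt0 ?mt1 ?mt2 ?mul0n ?mul1n.
Qed.

Lemma dhomog_dvd_Gcomb K : hom L K -> (forall i m, m \in msupp K -> (Gexp i %| m i)%N) ->
  K = Gcomb (fun j => K@_(Gmon j)).
Proof.
move=> KL Kdvd; apply/mpolyP => m; rewrite /Gcomb raddf_sum /=.
have [mK|mK] := boolP (m \in msupp K).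
  have [j ->] := Gmon_of_dvd (dhomog_mf KL mK) (fun i => Kdvd i m mK).
  rewrite (bigD1 j) //= mcoeffZ mcoeffX eqxx mulr1 big1 ?addr0 // => k kj.
  by rewrite mcoeffZ mcoeffX (inj_eq Gmon_inj) (negbTE kj) mulr0.
rewrite (memN_msupp_eq0 mK) big1 // => j _; rewrite mcoeffZ mcoeffX.
by case: eqP => [jm|_]; rewrite ?mulr0 // jm (memN_msupp_eq0 mK) mul0r.
Qed.

Lemma Wder_Gcomb_mcoeff_neq0 p kap D nu : p != 0 -> hom D p -> Wder p = Gcomb kap * p ->
  wdeg nu = D -> kap 2 = Weig 2 nu -> p@_nu != 0.
Proof.
move=> p0 pD pW nuD k2; have [nu' [nu'p _ k2']] := exists_Weig_min 2 p0 pD pW.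
have -> : nu = nu'; last by rewrite -mcoeff_msupp.
apply: (Weig_inj (j := 2)); last by rewrite -k2 -k2'.
by rewrite nuD; exact/esym/(dhomog_mf pD nu'p).
Qed.

Lemma Gcomb_cofactor_exps N kap D : N != 0 -> hom D N -> Wder N = Gcomb kap * N ->
  (forall i m, m \in msupp N -> (Gexp i %| m i)%N) ->
  exists m e, (forall j, kap j = Weig j (m + Gmon j *+ e)) /\
              (m + Gmon 2 *+ e)%MM \in msupp N.
Proof.
move=> N0 ND NW Ndvd.
have [nu nuP] := fin_all_exists (fun j => exists_Weig_min j N0 ND NW).
have nuN j : nu j \in msupp N by case: (nuP j).
have nu_min j i m : m \in msupp N -> i != j -> (nu j i <= m i)%N.
  by case: (nuP j) => _ + _; apply.
have succ_neq (i : 'I_3) : i != i + 1 by case: (ord3P i) => ->.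
(* [nu j] is minimal in every coordinate other than j, so the coordinatewise
   minimum of the three is read off [nu (i + 1)] in coordinate i. *)
pose mmin := [multinom nu (i + 1)%R i | i < 3].
have nuE j i : i != j -> nu j i = mmin i.
  move=> ij; rewrite mnmE; apply/eqP; rewrite eqn_leq.
  by rewrite nu_min ?nuN //= nu_min ?nuN.
have ex_e j : exists e, nu j = (mmin + Gmon j *+ e)%MM.
  have le_j : (mmin j <= nu j j)%N by rewrite mnmE nu_min ?nuN.
  have dvd_j : (Gexp j %| nu j j - mmin j)%N by rewrite mnmE dvdn_sub ?Ndvd ?nuN.
  exists ((nu j j - mmin j) %/ Gexp j)%N; apply/mnmP => i.
  rewrite mnmDE Gmon_mulE; case: eqP => [<-|/eqP ji] /=.
    by rewrite mulnC divnK // subnKC.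
  by rewrite addn0 nuE // eq_sym.
have [e eP] := fin_all_exists ex_e.
have degE j : (wdeg mmin + L * e j = D)%N.
  by have := dhomog_mf ND (nuN j); rewrite eP /= wdegD wdeg_Gmon_mul.
have eE j : e j = e 2.
  by apply/eqP; rewrite -(eqn_pmul2l lprod_gt0) -(eqn_add2l (wdeg mmin)) !degE.
exists mmin, (e 2); split=> [j|]; last by rewrite -eP nuN.
by case: (nuP j) => _ _ ->; rewrite eP eE.
Qed.

Lemma Gcomb_cofactor_shape N kap D : N != 0 -> hom D N -> Wder N = Gcomb kap * N ->
  (forall i m, m \in msupp N -> (Gexp i %| m i)%N) ->
  exists c m e, c != 0 /\ N = c *: ('X_[m] * G ^+ e).
Proof.
move=> N0 ND NW Ndvd; have [m [e [kapE nuN]]] := Gcomb_cofactor_exps N0 ND NW Ndvd.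
set nu := (m + Gmon 2 *+ e)%MM in nuN; set H := 'X_[m] * G ^+ e.
have HW : Wder H = Gcomb kap * H := Wder_XmGpow kapE.
have nuD : wdeg nu = D := dhomog_mf ND nuN.
have HD : hom D H.
  rewrite -nuD /nu wdegD wdeg_Gmon_mul.
  by apply: dhomogM; [rewrite dhomogX /= | exact: dhomogMn e dhomog_G].
have Hnu : H@_nu = 1 by rewrite /H /nu mcoeffXmM lem_addr /= addmC addmK mcoeff_Gpow.
have c0 : N@_nu != 0 by rewrite -mcoeff_msupp.
exists N@_nu, m, e; split=> //; apply/eqP; rewrite -subr_eq0; apply: contraT => Q0.
have QW : Wder (N - N@_nu *: H) = Gcomb kap * (N - N@_nu *: H).
  by rewrite linearB linearZ /= NW HW mulrBr scalerAr.
have QD : hom D (N - N@_nu *: H) by rewrite rpredB // dhomogZ.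
have := Wder_Gcomb_mcoeff_neq0 Q0 QD QW nuD (kapE 2).
by rewrite mcoeffB mcoeffZ Hnu mulr1 subrr eqxx.
Qed.

Lemma Wcofactor_mnorm i w d p K : w ^+ Gexp i = 1 -> hom d p -> Wder p = K * p -> hom L K ->
  exists2 K', Wder (mnorm i w (Gexp i) p) = K' * mnorm i w (Gexp i) p & hom L K'.
Proof.
move=> wi pd pK KL; exists (\sum_(0 <= j < Gexp i) mdil i (w ^+ j) K).
  apply: Wder_prod => j; rewrite -mdil_Wder ?pK ?rmorphM //.
  by rewrite exprAC wi expr1n.
by apply: rpred_sum => j _; apply: dhomog_mdil.
Qed.

Lemma mnorm_step i w p e K : (Gexp i).-primitive_root w ->
  p != 0 -> hom e p -> Wder p = K * p -> hom L K ->
  [/\ mnorm i w (Gexp i) p != 0, hom (e * Gexp i) (mnorm i w (Gexp i) p),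
      exists2 K', Wder (mnorm i w (Gexp i) p) = K' * mnorm i w (Gexp i) p & hom L K',
      mdil i w (mnorm i w (Gexp i) p) = mnorm i w (Gexp i) p &
      forall v, p.@[v] = 0 -> (mnorm i w (Gexp i) p).@[v] = 0].
Proof.
move=> /prim_expr_order w_root p0 pe pK KL; split.
- exact: mnorm_neq0 w_root (Gexp_gt0 i) _ p0.
- exact: dhomog_mnorm pe.
- exact: Wcofactor_mnorm w_root pe pK KL.
- exact: mdil_mnorm w_root (Gexp_gt0 i) p.
- by move=> v /(meval_mnorm_eq0 i w (Gexp_gt0 i)).
Qed.

Lemma exists_Gcomb_multiple F K d : F != 0 -> hom d F -> Wder F = K * F -> hom L K ->
  exists N D kap, [/\ N != 0, hom D N, Wder N = Gcomb kap * N,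
    forall i m, m \in msupp N -> (Gexp i %| m i)%N &
    forall v, F.@[v] = 0 -> N.@[v] = 0].
Proof.
move=> F0 Fd FK KL.
have w_ex i : exists w : C, (Gexp i).-primitive_root w.
  by apply: closed_prim_root_exists (Gexp_gt0 i) _; rewrite pnatr_eq0 -lt0n Gexp_gt0.
have [w w_prim] := fin_all_exists w_ex.
have [N0_0 N0d [K0 N0K K0L] N0w N0F] := mnorm_step (w_prim 0) F0 Fd FK KL.
have [N1_0 N1d [K1 N1K K1L] N1w N1F] := mnorm_step (w_prim 1) N0_0 N0d N0K K0L.
have [N_0 Nd [K2 NK K2L] Nw NF] := mnorm_step (w_prim 2) N1_0 N1d N1K K1L.
set N := mnorm 2 _ _ _ in N_0 Nd NK Nw NF.
have Nfix i : mdil i (w i) N = N.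
  case: (ord3P i) => ->; last exact: Nw; apply: mdil_mnorm_fixed; last exact: N1w.
  exact: mdil_mnorm_fixed N0w.
have Kfix i : mdil i (w i) K2 = K2.
  apply: (mulIf N_0); have := congr1 (mdil i (w i)) NK.
  rewrite mdil_Wder; last exact: prim_expr_order (w_prim i).
  by rewrite rmorphM /= !Nfix NK => /esym.
have dvd p : (forall i, mdil i (w i) p = p) -> forall i m, m \in msupp p -> (Gexp i %| m i)%N.
  by move=> pfix i m; apply: mdil_fixed_dvd (w_prim i) (pfix i).
exists N, (d * Gexp 0%R * Gexp 1%R * Gexp 2%R)%N, (fun j => K2@_(Gmon j)).
split; [exact: N_0 | exact: Nd | | |].
- by rewrite -(dhomog_dvd_Gcomb K2L (dvd _ Kfix)).
- exact: dvd _ Nfix.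
- by move=> v /N0F /N1F /NF.
Qed.

(** * The singular point *)

Definition pt (i : 'I_3) : C := (Gexp i).-root (resid i).

Lemma pt_exp i : pt i ^+ Gexp i = resid i.
Proof. exact: (rootCK (Gexp_gt0 i)). Qed.

Lemma resid_neq0 i : resid i != 0.
Proof.
rewrite /resid; apply/eqP => r0.
have [] : [/\ (i == 0%R : nat) = 0, (i == 1%R : nat) = 0 & (i == 2%R : nat) = 0]%N.
  by apply: Zlin_indep3_nat; move: r0; case: (ord3P i) => -> /= ->; ring.
by case: (ord3P i) => ->.
Qed.

Lemma resid_sum_neq0 : lam + mu + gam != 0.
Proof.
apply/eqP => s0; suff [] : [/\ 1 = 0, 1 = 0 & 1 = 0]%N by [].
apply: Zlin_indep3_nat.
by transitivity (lam + mu + gam); [ring | rewrite s0; ring].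
Qed.

Lemma pt_neq0 i : pt i != 0.
Proof. by rewrite /pt rootC_eq0 ?(Gexp_gt0 i) ?resid_neq0. Qed.

Lemma meval_XGmon (v : 'I_3 -> C) j : ('X_[Gmon j] : P).@[v] = v j ^+ Gexp j.
Proof.
rewrite mevalX (bigD1 j) //= Gmon_coord eqxx big1 ?mulr1 // => k kj.
by rewrite Gmon_coord eq_sym (negbTE kj).
Qed.

Lemma meval_G_pt : G.@[pt] = lam + mu + gam.
Proof. by rewrite GpolyE rmorph_sum big_ord3 /= !meval_XGmon !pt_exp. Qed.

Lemma singular_pt : singular_at beta pt.
Proof.
split=> [|i]; first by exists 0; exact: pt_neq0.
have Bpt : (Bpol i).@[pt] = 0.
  by rewrite /Bpol mevalB !mevalM !mevalC meval_G_pt meval_XGmon pt_exp mulrC subrr.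
have := congr1 (meval pt) (mulX_beta i); rewrite !mevalM Bpt mulr0 mevalXU => /eqP.
by rewrite mulf_eq0 (negbTE (pt_neq0 i)) => /eqP.
Qed.

Lemma meval_XmGpow_pt_neq0 m e : ('X_[m] * G ^+ e).@[pt] != 0.
Proof.
rewrite mevalM mevalX rmorphXn /= meval_G_pt.
apply: mulf_neq0; last exact: expf_neq0 resid_sum_neq0.
by rewrite prodf_seq_neq0; apply/allP => k _; exact: expf_neq0 (pt_neq0 k).
Qed.

Lemma no_invariant_curve_through_pt F :
  curve_eq l0 l1 l2 F -> F.@[pt] = 0 -> ~ invariant_curve beta F.
Proof.
move=> [[d /qhomog_dhomog Fd] Fnc] Fpt Finv.
have F0 : F != 0 by have := Fnc 0; rewrite mpolyC0.
have [K FK] := invariant_Wder F0 Fd Finv.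
have [FK' K'L] := Wder_cofactor_dhomog Fd FK.
have [N [D [kap [N0 ND NW Ndvd NF]]]] := exists_Gcomb_multiple F0 Fd FK' K'L.
have [c [m [e [c0 NE]]]] := Gcomb_cofactor_shape N0 ND NW Ndvd.
have /eqP := NF _ Fpt; rewrite NE mevalZ mulf_eq0 (negbTE c0) /=.
exact/negP/meval_XmGpow_pt_neq0.
Qed.

End Foliation.

Local Open Scope complex_scope.

Theorem proposition4p4 (R : realType) (l0 l1 l2 : nat) (lam mu gam : R[i]) :
  (1 <= l0)%N -> (l0 <= l1)%N -> (l1 <= l2)%N ->
  coprime l0 l1 -> coprime l0 l2 -> coprime l1 l2 ->
  Zlin_indep3 lam mu gam ->
  exists p : 'I_3 -> R[i],
    [/\ singular_at (beta l0 l1 l2 lam mu gam) p,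
        p 0 * p 1 * p 2 != 0 &
        forall F : {mpoly R[i][3]}, curve_eq l0 l1 l2 F -> F.@[p] = 0 ->
          ~ invariant_curve (beta l0 l1 l2 lam mu gam) F].
Proof.
move=> l0_gt0 l01 l12 _ _ _ lmg_indep.
have l1_gt0 := leq_trans l0_gt0 l01; have l2_gt0 := leq_trans l1_gt0 l12.
exists (pt l0 l1 l2 lam mu gam); split.
- exact: singular_pt.
- by rewrite !mulf_neq0 ?pt_neq0.
- exact: no_invariant_curve_through_pt.
Qed.
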